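(* Let $G=(V,E)$ be a simple undirected graph on $n$ nodes, let $0<\epsilon<\frac13$, $\delta>0$, $p\in(0,1)$, and let $D\subseteq V$ be an $\epsilon^3$-near clique with $|D|\ge\delta n$. Let $S$ be a random subset of $V$ containing each node independently with probability $p$. Then with probability at least $1-\frac{1}{\epsilon^2\delta}e^{-\Omega(\epsilon^4\delta\cdot pn)}$ over the selection of $S$, there exists a connected component $S_i$ of $G[S]$ and a set $X^*\subseteq S_i$ such that $|T_\epsilon(X^* )|\ge(1-\frac{13}{2}\epsilon)|D|-\epsilon^{-2}$.
   Context: $\Gamma(v)$ denotes the set of neighbors of $v$; $G[S]$ is the subgraph induced by $S$. For $Y\subseteq V$ and $0\le\eta\le1$: $K_\eta(Y)=\{v\in V: |\Gamma(v)\cap Y|\ge(1-\eta)|Y|\}$, and $T_\epsilon(X)=K_\epsilon(K_{2\epsilon^2}(X))\cap K_{2\epsilon^2}(X)$. Each undirected edge is counted as two directed edges; a set $D\subseteq V$ is a $\gamma$-near clique if $|\{(u,v)\in D\times D:\{u,v\}\in E\}|\ge(1-\gamma)|D|(|D|-1)$. $\Omega(\cdot)$ hides an absolute positive constant. *)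

From HB Require Import structures.
From mathcomp Require Import all_boot all_order all_algebra.
From mathcomp Require Import Rstruct.
From Stdlib Require Import Rdefinitions Rtrigo_def.
Set Implicit Arguments. Unset Strict Implicit. Unset Printing Implicit Defensive.
Import Order.TTheory GRing.Theory Num.Theory.
Local Open Scope ring_scope.

Section Graphs.
Variable T : finType.

Definition simple_graph (e : rel T) : Prop := symmetric e /\ irreflexive e.

Definition nbhd (e : rel T) (v : T) : {set T} := [set u | e v u].

Definition Kset (e : rel T) (eta : R) (Y : {set T}) : {set T} :=
  [set v | (1 - eta) * (#|Y|%:R) <= (#|nbhd e v :&: Y|%:R : R)].

Definition Tset (e : rel T) (eps : R) (X : {set T}) : {set T} :=
  Kset e eps (Kset e (2 * eps ^+ 2) X) :&: Kset e (2 * eps ^+ 2) X.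

Definition dir_edges (e : rel T) (D : {set T}) : nat :=
  #|[set uv : T * T | [&& uv.1 \in D, uv.2 \in D & e uv.1 uv.2]]|.

Definition near_clique (e : rel T) (gamma : R) (D : {set T}) : Prop :=
  (1 - gamma) * (#|D|%:R * (#|D|%:R - 1)) <= ((dir_edges e D)%:R : R).

Definition induced (e : rel T) (S : {set T}) : rel T :=
  [rel x y | [&& x \in S, y \in S & e x y]].

Definition component (e : rel T) (S : {set T}) (x : T) : {set T} :=
  [set y in S | connect (induced e S) x y].

(* Probability of an event over the random subset S in which each node is
   included independently with probability p *)
Definition prob_subset (p : R) (P : {set T} -> bool) : R :=
  \sum_(S : {set T} | P S) p ^+ #|S| * (1 - p) ^+ (#|T| - #|S|).

End Graphs.

(* Let A be the nodes of D with at most eps^2 |D| non-neighbours in D; the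
   near-clique condition gives |A| >= (1 - eps) |D|.  Put mu = p |A| and
   nu = eps^2 mu.  Chernoff bounds, combined with Markov's inequality for the
   number of exceptional nodes, show that outside an event of probability
   O(exp(-nu / 250) / (eps^2 delta)) the sample S meets A in about mu nodes,
   few nodes of A are heavy (have >= 1.7 nu sampled non-neighbours in A), and
   few nodes with >= 2.5 eps^2 |A| non-neighbours in A have <= 2.21 nu sampled
   ones.  Then X, the light nodes of S :&: A, is the set we look for: two light
   nodes miss fewer than half of S :&: A, so they have a common sampled
   neighbour and X lies in one component of G[S]; every non-heavy node of A
   lies in Y = K_{2 eps^2}(X); and counting non-edges between A and Y shows
   that all but O(eps) |D| non-heavy nodes of A miss at most eps |Y| nodes of
   Y, i.e. lie in T_eps(X).  Since nu >= 6 eps^4 delta p n, the constant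
   c = 1/1000 works. *)

From HB Require Import structures.
From mathcomp Require Import all_boot all_order all_algebra.
From mathcomp Require Import Rstruct.
From Stdlib Require Import Rdefinitions Rtrigo_def Exp_prop Rpower.
From mathcomp Require Import ring lra.
Set Implicit Arguments. Unset Strict Implicit. Unset Printing Implicit Defensive.
Import Order.TTheory GRing.Theory Num.Theory.
Local Open Scope ring_scope.

Section Exponential.
(* Arguments of [exp] are read in [ring_scope] only inside sections, so that
   the final statement keeps the Stdlib reading of [exp]. *)
#[local] Arguments exp x%_ring_scope.

Lemma exp_gt0 (x : R) : 0 < exp x.
Proof. by apply/RltP; apply: exp_pos. Qed.

Lemma exp_ge1Dx (x : R) : 1 + x <= exp x.
Proof. by apply/RleP; apply: exp_ineq1_le. Qed.

Lemma ler_exp (x y : R) : x <= y -> exp x <= exp y.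
Proof.
rewrite le_eqVlt => /orP [/eqP -> //| /RltP xy].
by apply/ltW/RltP; apply: exp_increasing.
Qed.

Lemma expD (x y : R) : exp (x + y) = exp x * exp y.
Proof. by rewrite -expRD. Qed.

Lemma exp_ge1 (x : R) : 0 <= x -> 1 <= exp x.
Proof. by move=> x0; apply: le_trans (exp_ge1Dx x); lra. Qed.

Lemma expN (x : R) : exp (- x) = (exp x)^-1.
Proof.
apply: (mulfI (lt0r_neq0 (exp_gt0 x))).
by rewrite -expD subrr expR0 divff // lt0r_neq0 // exp_gt0.
Qed.

Lemma exp_mulrn (x : R) (n : nat) : exp (x * n%:R) = exp x ^+ n.
Proof.
elim: n => [|n IHn]; first by rewrite mulr0 expR0.
by rewrite -addn1 natrD mulrDr mulr1 expD IHn exprD.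
Qed.

Lemma exprn_le_exp (q a : R) (n : nat) :
  0 <= q -> q <= exp a -> q ^+ n <= exp (a * n%:R).
Proof.
move=> q0 qa; rewrite exp_mulrn.
by apply: lerXn2r; rewrite // nnegrE ltW // exp_gt0.
Qed.

Lemma exp_divD1_le (s : R) : 0 < s -> exp (s / (1 + s)) <= 1 + s.
Proof.
move=> s0.
have : 1 - s / (1 + s) <= exp (- (s / (1 + s))) by apply: le_trans (exp_ge1Dx _); lra.
have -> : 1 - s / (1 + s) = (1 + s)^-1 by field; lra.
by rewrite expN lef_pV2 // posrE ?exp_gt0 //; lra.
Qed.

Lemma expN_le_invD1 (s : R) : 0 < s -> exp (- s) <= (1 + s)^-1.
Proof.
move=> s0; rewrite expN lef_pV2 ?posrE ?exp_gt0 //; last lra.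
exact: exp_ge1Dx.
Qed.

Lemma expN2_ge : 9^-1 <= exp (- 2).
Proof.
have e1 : exp 1 <= 3 by apply/RleP; exact: exp_le_3.
have e2 : exp 2 <= 9.
  have -> : exp 2 = exp 1 ^+ 2 by rewrite -exp_mulrn mul1r.
  have e0 : 0 < exp 1 := exp_gt0 _.
  by rewrite expr2; nra.
by rewrite expN lef_pV2 ?posrE ?exp_gt0.
Qed.

Lemma exp8_ge : 256 <= exp 8.
Proof.
have -> : exp 8 = exp 1 ^+ 8 by rewrite -exp_mulrn mul1r.
apply: le_trans (_ : 2 ^+ 8 <= _).
  by rewrite !exprS expr0; lra.
have e1 : 1 + 1 <= exp 1 := exp_ge1Dx _.
by apply: lerXn2r; rewrite ?nnegrE //; lra.
Qed.

End Exponential.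

Lemma cards_in_sum (T : finType) (A : {set T}) (P : pred T) :
  #|[set x in A | P x]| = (\sum_(x in A) (P x : nat))%N.
Proof.
rewrite -sum1_card big_mkcond [RHS]big_mkcond /=.
by apply: eq_bigr => x _; rewrite inE; case: (x \in A); case: (P x).
Qed.

Section RandomSubset.
Variables (T : finType) (p : R).

Definition sample_weight (S : {set T}) : R :=
  \prod_(x : T) (if x \in S then p else 1 - p).

Lemma prob_subsetE (P : {set T} -> bool) :
  prob_subset p P = \sum_(S | P S) sample_weight S.
Proof.
apply: eq_bigr => S _; rewrite /sample_weight (bigID (mem S)) /=.
rewrite (eq_bigr (fun _ => p)) => [|x -> //].
rewrite [X in _ = _ * X](eq_bigr (fun _ => 1 - p)) => [|x /negbTE -> //].
rewrite !prodr_const -(cardsC S) addKn; congr (_ * _ ^+ _).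
by apply: eq_card => x; rewrite !inE.
Qed.

Lemma sum_sample_weight_prod (g : T -> bool -> R) :
  \sum_(S : {set T}) sample_weight S * \prod_(x : T) g x (x \in S)
  = \prod_(x : T) (p * g x true + (1 - p) * g x false).
Proof.
rewrite bigA_distr; apply: eq_bigr => S _.
by rewrite -big_split; apply: eq_bigr => x _; case: (x \in S).
Qed.

Lemma prob_subsetC (P : {set T} -> bool) :
  prob_subset p P = 1 - prob_subset p (fun S => ~~ P S).
Proof.
have total : \sum_(S : {set T}) sample_weight S = 1.
  transitivity (\sum_(S : {set T}) sample_weight S * \prod_(x : T) (1 : R)).
    by apply: eq_bigr => S _; rewrite big1 ?mulr1.
  by rewrite (sum_sample_weight_prod (fun _ _ => 1)) big1 // => x _; ring.
by rewrite !prob_subsetE -total (bigID P predT) addrK.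
Qed.

Hypothesis (p_ge0 : 0 <= p) (p_le1 : p <= 1).

Lemma sample_weight_ge0 (S : {set T}) : 0 <= sample_weight S.
Proof. by apply: prodr_ge0 => x _; case: (x \in S); rewrite ?subr_ge0. Qed.

Lemma prob_subset_ge0 (P : {set T} -> bool) : 0 <= prob_subset p P.
Proof. by rewrite prob_subsetE sumr_ge0 // => S _; apply: sample_weight_ge0. Qed.

Lemma prob_subset_le (P Q : {set T} -> bool) :
  (forall S, P S -> Q S) -> prob_subset p P <= prob_subset p Q.
Proof.
move=> PQ; rewrite !prob_subsetE [X in X <= _]big_mkcond [X in _ <= X]big_mkcond.
apply: ler_sum => S _; have := sample_weight_ge0 S.
by case: (boolP (P S)) => [/PQ -> //|_]; case: (Q S).
Qed.

Lemma prob_subset_nand (P Q : {set T} -> bool) :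
  prob_subset p (fun S => ~~ (P S && Q S))
    <= prob_subset p (fun S => ~~ P S) + prob_subset p (fun S => ~~ Q S).
Proof.
rewrite !prob_subsetE (big_mkcond (fun S => ~~ P S)) (big_mkcond (fun S => ~~ Q S)).
rewrite (big_mkcond (fun S => ~~ (P S && Q S))) -big_split /=.
apply: ler_sum => S _; have := sample_weight_ge0 S.
by case: (P S); case: (Q S) => /=; lra.
Qed.

Lemma prob_subset_le_mean (Q P : {set T} -> bool) (f : {set T} -> R) :
  (forall S, 0 <= f S) -> (forall S, P S -> 1 <= f S) ->
  prob_subset p (fun S => Q S && P S) <= \sum_(S | Q S) sample_weight S * f S.
Proof.
move=> f_ge0 f_ge1.
rewrite prob_subsetE (big_mkcond (fun S => Q S && P S)) (big_mkcond Q) /=.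
apply: ler_sum => S _; have w0 := sample_weight_ge0 S.
case: (P S) (f_ge1 S) => [/(_ isT) f1 | _]; last by case: (Q S); rewrite ?mulr_ge0.
by case: (Q S) => //; rewrite -[X in X <= _]mulr1 ler_wpM2l.
Qed.

End RandomSubset.

Section Chernoff.
Variables (T : finType) (p : R).
#[local] Arguments exp x%_ring_scope.

Lemma prod_indicator (C S : {set T}) :
  \prod_(x in C) ((x \in S)%:R : R) = (C \subset S)%:R.
Proof.
have [/subsetP CS | /subsetPn [x xC xS]] := boolP (C \subset S).
  by rewrite big1 // => x /CS ->.
by rewrite (bigD1 x) //= (negbTE xS) mul0r.
Qed.

Lemma exp_card_setI (S B : {set T}) (l : R) :
  exp (l * #|S :&: B|%:R) = \prod_(x : T) (if (x \in S) && (x \in B) then exp l else 1).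
Proof.
rewrite exp_mulrn -big_mkcond prodr_const; congr (_ ^+ _).
by apply: eq_card => x; rewrite inE.
Qed.

Lemma sample_mgf (C B : {set T}) (l : R) : [disjoint C & B] ->
  \sum_(S : {set T} | C \subset S) sample_weight p S * exp (l * #|S :&: B|%:R)
  = p ^+ #|C| * (1 - p + p * exp l) ^+ #|B|.
Proof.
move=> dCB.
pose g x (b : bool) : R :=
  (if x \in C then b%:R else 1) * (if b && (x \in B) then exp l else 1).
transitivity (\sum_(S : {set T}) sample_weight p S * \prod_(x : T) g x (x \in S)).
  rewrite big_mkcond; apply: eq_bigr => S _.
  rewrite big_split /= -big_mkcond prod_indicator -exp_card_setI.
  by case: (C \subset S); rewrite ?mul1r ?mul0r ?mulr0.
rewrite sum_sample_weight_prod -!prodr_const [\prod_(i in C) _]big_mkcond.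
rewrite [\prod_(i in B) _]big_mkcond -big_split /=.
apply: eq_bigr => x _; rewrite /g.
have [xC | _] := boolP (x \in C); last by case: (x \in B) => /=; ring.
by rewrite (disjointFr dCB xC) /=; ring.
Qed.

Hypothesis (p_ge0 : 0 <= p) (p_le1 : p <= 1).

(* Exponential moment method with parameter [l = s / (1 + s)]. *)
Lemma chernoff_upper (C B : {set T}) (s k b : R) :
  [disjoint C & B] -> 0 < s -> 0 <= k -> #|B|%:R <= b ->
  prob_subset p (fun S => (C \subset S) && (k <= #|S :&: B|%:R))
    <= p ^+ #|C| * exp (p * s * b - k * (s / (1 + s))).
Proof.
move=> dCB s0 k0 Bb; set l := s / (1 + s).
have l0 : 0 < l by rewrite divr_gt0 //; lra.
apply: le_trans (prob_subset_le_mean p_ge0 p_le1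
  (f := fun S => exp (l * #|S :&: B|%:R) * exp (- (k * l))) _ _ _) _.
- by move=> S; rewrite mulr_ge0 // ltW // exp_gt0.
- by move=> S kS; rewrite -expD exp_ge1 // subr_ge0 mulrC ler_wpM2l // ltW.
under eq_bigr do rewrite mulrA.
rewrite -big_distrl /= sample_mgf // expD mulrA.
apply: ler_wpM2r; first by rewrite ltW ?exp_gt0.
have := exp_divD1_le s0; have := exp_gt0 l; rewrite -/l => el0 el.
have q0 : 0 <= 1 - p + p * exp l by move: p_ge0 p_le1; nra.
have q_le : 1 - p + p * exp l <= exp (p * s).
  by apply: le_trans (exp_ge1Dx _); move: p_ge0; nra.
apply: ler_wpM2l; first exact: exprn_ge0.
apply: le_trans (exprn_le_exp _ q0 q_le) _.
by rewrite ler_exp // ler_wpM2l // mulr_ge0 // ltW.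
Qed.

Lemma chernoff_lower (B : {set T}) (s k b : R) :
  0 < s -> 0 <= b -> b <= #|B|%:R ->
  prob_subset p (fun S => #|S :&: B|%:R <= k)
    <= exp (s * k - p * b * (s / (1 + s))).
Proof.
move=> s0 b0 bB.
apply: le_trans (prob_subset_le_mean p_ge0 p_le1 predT
  (f := fun S => exp (- s * #|S :&: B|%:R) * exp (s * k)) _ _) _.
- by move=> S; rewrite mulr_ge0 // ltW // exp_gt0.
- move=> S Sk; rewrite -expD exp_ge1 // mulNr addrC subr_ge0 ler_wpM2l //; lra.
under eq_bigr do rewrite mulrA.
rewrite -big_distrl /= (eq_bigl (fun S : {set T} => set0 \subset S)); last first.
  by move=> S; rewrite sub0set.
rewrite sample_mgf; last by rewrite -setI_eq0 set0I.
rewrite cards0 expr0 mul1r.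
rewrite [s * k - _]addrC expD; apply: ler_wpM2r; first by rewrite ltW ?exp_gt0.
have es : exp (- s) <= 1 - s / (1 + s).
  have -> : 1 - s / (1 + s) = (1 + s)^-1 by field; lra.
  exact: expN_le_invD1.
have es0 := exp_gt0 (- s).
have q0 : 0 <= 1 - p + p * exp (- s) by move: p_ge0 p_le1; nra.
have q_le : 1 - p + p * exp (- s) <= exp (- (p * (s / (1 + s)))).
  by apply: le_trans (exp_ge1Dx _); move: p_ge0; nra.
apply: le_trans (exprn_le_exp _ q0 q_le) _; rewrite ler_exp //.
have : 0 <= p * (s / (1 + s)) by rewrite mulr_ge0 // divr_ge0 //; lra.
nra.
Qed.

Lemma prob_count_gt (V : {set T}) (P : T -> {set T} -> bool) (th c : R) :
  0 < th -> (forall v, v \in V -> prob_subset p (P v) <= c) ->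
  prob_subset p (fun S => th < #|[set v in V | P v S]|%:R) <= #|V|%:R * c / th.
Proof.
move=> th0 Pc.
apply: le_trans (prob_subset_le_mean p_ge0 p_le1 predT
  (f := fun S => #|[set v in V | P v S]|%:R / th) _ _) _.
- by move=> S; rewrite divr_ge0 // ltW.
- by move=> S thS; rewrite ler_pdivlMr // mul1r ltW.
under eq_bigr do rewrite mulrA.
rewrite -big_distrl /=; apply: ler_wpM2r; first by rewrite invr_ge0 ltW.
have count S : #|[set v in V | P v S]|%:R = \sum_(v in V) ((P v S)%:R : R).
  by rewrite cards_in_sum natr_sum.
under eq_bigr do rewrite count big_distrr /=.
rewrite exchange_big /= mulr_natl -sumr_const; apply: ler_sum => v vV.
apply: le_trans (Pc v vV); rewrite prob_subsetE (big_mkcond (P v)); apply: ler_sum => S _.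
by case: (P v S); rewrite ?mulr1 ?mulr0.
Qed.

End Chernoff.

Section NonNeighbours.
Variables (T : finType) (e : rel T).

Definition non_nbhd (A : {set T}) (v : T) : {set T} := A :\: nbhd e v.

Lemma ler_card (P Q : {set T}) : P \subset Q -> (#|P|%:R : R) <= #|Q|%:R.
Proof. by move=> PQ; rewrite ler_nat subset_leq_card. Qed.

Lemma ler_cardU (P Q : {set T}) : (#|P :|: Q|%:R : R) <= #|P|%:R + #|Q|%:R.
Proof. by rewrite -natrD ler_nat cardsU leq_subr. Qed.

Lemma card_setDR (P Q : {set T}) : (#|P :\: Q|%:R : R) = #|P|%:R - #|P :&: Q|%:R.
Proof. by rewrite -(cardsID Q P) natrD; ring. Qed.

Lemma in_Kset (eta : R) (Y : {set T}) (v : T) :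
  (v \in Kset e eta Y) = (#|non_nbhd Y v|%:R <= eta * #|Y|%:R).
Proof.
rewrite inE /non_nbhd card_setDR setIC.
by apply/idP/idP; lra.
Qed.

Lemma sum_card_non_nbhdC (P Q : {set T}) : symmetric e ->
  (\sum_(u in P) #|non_nbhd Q u| = \sum_(w in Q) #|non_nbhd P w|)%N.
Proof.
move=> sym.
have non_nbhdE (P' : {set T}) u : #|non_nbhd P' u| = (\sum_(w in P') (~~ e u w : nat))%N.
  rewrite -cards_in_sum; apply: eq_card => w; rewrite !inE andbC.
  by case: (w \in P').
under eq_bigr do rewrite non_nbhdE.
under [RHS]eq_bigr do rewrite non_nbhdE.
by rewrite exchange_big; apply: eq_bigr => w _; apply: eq_bigr => u _; rewrite sym.
Qed.

Lemma connect_induced_common_nbhd (S Z : {set T}) (x y : T) :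
  symmetric e -> x \in S -> y \in S -> Z \subset S ->
  (#|non_nbhd Z x|%:R + #|non_nbhd Z y|%:R < (#|Z|%:R : R)) ->
  connect (induced e S) x y.
Proof.
move=> sym xS yS /subsetP ZS small.
have [z zZ /andP [exz eyz]] : exists2 z, z \in Z & e x z && e y z.
  apply/exists_inP; apply: contraLR small => /exists_inPn far; rewrite -leNgt.
  apply: le_trans (ler_cardU _ _); apply: ler_card; apply/subsetP => z zZ.
  by have := far z zZ; rewrite !inE zZ !andbT -negb_and.
apply: (@connect_trans _ _ z); apply: connect1; rewrite /induced /= (ZS z zZ) ?xS ?yS //=.
by rewrite sym.
Qed.

(* Markov's inequality for the non-neighbours in [Y]: the nodes of [P] missing
   more than [eps |Y|] of [Y] are few, which leaves most of [P] in [T_eps(X)]. *)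
Lemma card_Tset_ge (eps : R) (X P : {set T}) : symmetric e -> 0 < eps ->
  P \subset Kset e (2 * eps ^+ 2) X ->
  #|P|%:R - (\sum_(w in Kset e (2 * eps ^+ 2) X) (#|non_nbhd P w|%:R : R))
              / (eps * #|Kset e (2 * eps ^+ 2) X|%:R)
    <= #|Tset e eps X|%:R.
Proof.
move=> sym eps0 PY; set Y := Kset e _ X.
set U := [set u in P | eps * #|Y|%:R < #|non_nbhd Y u|%:R].
have PU_T : P :\: U \subset Tset e eps X.
  apply/subsetP => u; rewrite in_setD inE => /andP [uU uP].
  rewrite /Tset in_setI (subsetP PY) // andbT -/Y in_Kset.
  by move: uU; rewrite uP /= -leNgt.
apply: le_trans (ler_card PU_T); rewrite card_setDR.
have -> : P :&: U = U by apply/setIidPr/subsetP => u; rewrite inE => /andP [].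
rewrite lerD2l lerN2.
have [Y0 | Ypos] := posnP #|Y|.
  suff -> : U = set0.
    rewrite cards0; apply: divr_ge0; first exact: sumr_ge0.
    by rewrite mulr_ge0 ?ler0n // ltW.
  apply/setP => u; rewrite !inE Y0 mulr0.
  suff -> : #|non_nbhd Y u| = 0%N by rewrite ltxx andbF.
  by apply/eqP; rewrite -leqn0 -Y0 subset_leq_card ?subsetDl.
have epsY : 0 < eps * #|Y|%:R by rewrite mulr_gt0 // ltr0n.
rewrite ler_pdivlMr // -natr_sum -sum_card_non_nbhdC // natr_sum.
rewrite mulr_natl -sumr_const; apply: le_trans (_ : \sum_(u in U) (#|non_nbhd Y u|%:R : R) <= _).
  by apply: ler_sum => u; rewrite inE => /andP [_ /ltW].
rewrite -!natr_sum ler_nat.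
apply: sub_le_big => // [m n | u]; first exact: leq_addr.
by rewrite inE => /andP [].
Qed.

Lemma dir_edgesE (D : {set T}) :
  dir_edges e D = (\sum_(u in D) #|D :&: nbhd e u|)%N.
Proof.
rewrite /dir_edges.
have -> : [set uv : T * T | [&& uv.1 \in D, uv.2 \in D & e uv.1 uv.2]]
    = [set uv in [set: T * T] | [&& uv.1 \in D, uv.2 \in D & e uv.1 uv.2]].
  by apply/setP => uv; rewrite !inE.
rewrite (cards_in_sum _ (fun uv => [&& uv.1 \in D, uv.2 \in D & e uv.1 uv.2])).
rewrite (eq_bigl predT) => [|uv]; last by rewrite inE.
rewrite -(pair_bigA _ (fun u v => [&& u \in D, v \in D & e u v] : nat)) /=.
rewrite [RHS]big_mkcond; apply: eq_bigr => u _.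
have [uD | _] := boolP (u \in D); last by rewrite big1.
have -> : D :&: nbhd e u = [set v in [set: T] | (v \in D) && e u v].
  by apply/setP => v; rewrite !inE.
by rewrite cards_in_sum; apply: eq_bigl => v; rewrite inE.
Qed.

(* [non_nbhd D v] contains [v] itself, hence the [+ 1]. *)
Definition high_degree (eps : R) (D : {set T}) : {set T} :=
  [set v in D | #|non_nbhd D v|%:R <= eps ^+ 2 * #|D|%:R + 1].

Lemma high_degree_sub (eps : R) (D : {set T}) : high_degree eps D \subset D.
Proof. by apply/subsetP => v; rewrite inE => /andP []. Qed.

Lemma card_non_nbhd_high_degree (eps : R) (D : {set T}) (v : T) :
  v \in high_degree eps D ->
  (#|non_nbhd (high_degree eps D) v|%:R : R) <= eps ^+ 2 * #|D|%:R + 1.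
Proof.
move=> vA; apply: le_trans (ler_card (setSD _ (high_degree_sub eps D))) _.
by move: vA; rewrite inE => /andP [].
Qed.

Lemma sum_card_non_nbhd_near_clique (gamma : R) (D : {set T}) :
  near_clique e gamma D ->
  \sum_(u in D) (#|non_nbhd D u|%:R - 1) <= gamma * (#|D|%:R * (#|D|%:R - 1)).
Proof.
move=> near; under eq_bigr do rewrite /non_nbhd card_setDR.
rewrite !big_split /= !sumrN !sumr_const.
by move: near; rewrite /near_clique dir_edgesE natr_sum -mulr_natr; lra.
Qed.

Lemma card_high_degree (eps : R) (D : {set T}) :
  irreflexive e -> 0 < eps -> near_clique e (eps ^+ 3) D ->
  (1 - eps) * #|D|%:R <= #|high_degree eps D|%:R.
Proof.
move=> irr eps0 near; set A := high_degree eps D; set m : R := #|D|%:R.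
have self_non_nbhd u : u \in D -> 1 <= (#|non_nbhd D u|%:R : R).
  move=> uD; rewrite ler1n card_gt0; apply/set0Pn; exists u.
  by rewrite !inE irr.
have far : #|D :\: A|%:R * (eps ^+ 2 * m) <= \sum_(u in D) (#|non_nbhd D u|%:R - 1).
  apply: le_trans (_ : \sum_(u in D :\: A) (#|non_nbhd D u|%:R - 1) <= _).
    rewrite mulr_natl -sumr_const; apply: ler_sum => u; rewrite !inE => /andP [uA uD].
    by move: uA; rewrite uD /= -ltNge => /ltW; rewrite -/m; lra.
  rewrite [leRHS](bigID (mem A)) /= -[leLHS]add0r; apply: lerD.
    by apply: sumr_ge0 => u /andP [uD _]; rewrite subr_ge0 self_non_nbhd.
  by rewrite (eq_bigl (fun u => (u \in D) && (u \notin A))) // => u; rewrite !inE andbC.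
have := le_trans far (sum_card_non_nbhd_near_clique near).
rewrite card_setDR (setIidPr (high_degree_sub eps D)) -/m.
have [-> _ | m_neq0] := eqVneq m 0; first by rewrite mulr0 ler0n.
have mpos : 0 < m by rewrite lt0r m_neq0 ler0n.
have -> : eps ^+ 3 * (m * (m - 1)) = eps * (m - 1) * (eps ^+ 2 * m) by ring.
by rewrite ler_pM2r ?mulr_gt0 ?exprn_gt0 //; lra.
Qed.

End NonNeighbours.

Section GoodSample.
Variables (T : finType) (e : rel T) (eps p : R) (D A : {set T}).

Local Notation a := (#|A|%:R : R).
Local Notation mu := (p * a).
Local Notation nu := (eps ^+ 2 * mu).

(* [mu] is the expected size of [S :&: A] and [nu] the scale at which the
   sampled non-neighbourhoods of nodes of [A] are observed. *)
Definition heavy (S : {set T}) : {set T} :=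
  [set v in A | 17 / 10 * nu <= #|S :&: non_nbhd e A v|%:R].

Definition light (S : {set T}) : {set T} := (S :&: A) :\: heavy S.

Definition misjudged (S : {set T}) : {set T} :=
  [set w | (5 / 2 * eps ^+ 2 * a <= #|non_nbhd e A w|%:R)
           && (#|S :&: non_nbhd e A w|%:R <= 221 / 100 * nu)].

Definition good_sample (S : {set T}) : bool :=
  [&& 9 / 10 * mu < #|S :&: A|%:R, #|S :&: A|%:R <= 11 / 10 * mu,
      #|heavy S|%:R <= eps / 10 * a, #|S :&: heavy S|%:R <= nu / 100
    & #|misjudged S|%:R <= eps ^+ 2 * #|D|%:R / 100].

Lemma non_nbhd_setI (S : {set T}) (v : T) :
  non_nbhd e (S :&: A) v = S :&: non_nbhd e A v.
Proof. by rewrite /non_nbhd setIDA. Qed.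

Lemma light_sub (S : {set T}) : light S \subset S.
Proof. by rewrite /light subDset subsetU // subsetIl orbT. Qed.

Lemma card_light (S : {set T}) :
  #|light S|%:R = #|S :&: A|%:R - (#|S :&: heavy S|%:R : R).
Proof.
have heavy_sub : heavy S \subset A by apply/subsetP => v; rewrite inE => /andP [].
by rewrite /light card_setDR -setIA (setIidPr heavy_sub).
Qed.

Lemma light_connected (S : {set T}) (x y : T) : symmetric e ->
  34 / 10 * nu < #|S :&: A|%:R -> x \in light S -> y \in light S ->
  connect (induced e S) x y.
Proof.
move=> sym Zbig xl yl.
have small v : v \in light S -> (#|non_nbhd e (S :&: A) v|%:R : R) < 17 / 10 * nu.
  rewrite non_nbhd_setI !inE => /and3P [nh _ vA].
  by move: nh; rewrite vA /= -ltNge.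
apply: connect_induced_common_nbhd (subsetIl S A) _ => //.
- exact: (subsetP (light_sub S)).
- exact: (subsetP (light_sub S)).
- by have := small x xl; have := small y yl; lra.
Qed.

Lemma non_heavy_sub_Kset (S : {set T}) :
  17 / 10 * nu <= 2 * eps ^+ 2 * #|light S|%:R ->
  A :\: heavy S \subset Kset e (2 * eps ^+ 2) (light S).
Proof.
move=> light_big; apply/subsetP => u; rewrite in_setD => /andP [uh uA].
rewrite in_Kset; apply: le_trans light_big.
apply: le_trans (_ : (#|S :&: non_nbhd e A u|%:R : R) <= _).
  apply: ler_card; rewrite -non_nbhd_setI; exact: setSD (subsetDl _ _).
by apply: ltW; move: uh; rewrite inE uA /= -ltNge.
Qed.

Lemma sampled_non_nbhd_Kset (S : {set T}) (w : T) :
  w \in Kset e (2 * eps ^+ 2) (light S) ->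
  (#|S :&: non_nbhd e A w|%:R : R)
    <= 2 * eps ^+ 2 * #|light S|%:R + #|S :&: heavy S|%:R.
Proof.
rewrite in_Kset => wK.
have cover : S :&: non_nbhd e A w \subset non_nbhd e (light S) w :|: (S :&: heavy S).
  apply/subsetP => z; rewrite !inE => /and3P [zS zn zA].
  by rewrite zS zn zA /= andbT orNb.
apply: le_trans (ler_card cover) _; apply: le_trans (ler_cardU _ _) _.
by rewrite lerD2r.
Qed.

Lemma sum_non_nbhd_le (S P Y : {set T}) : P \subset A ->
  (forall w, w \in Y -> #|S :&: non_nbhd e A w|%:R <= 221 / 100 * nu) ->
  \sum_(w in Y) (#|non_nbhd e P w|%:R : R)
    <= #|misjudged S|%:R * a + #|Y|%:R * (5 / 2 * eps ^+ 2 * a).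
Proof.
move=> PA Y_small.
have a0 : 0 <= eps ^+ 2 * a by rewrite mulr_ge0 ?sqr_ge0 ?ler0n.
apply: le_trans (_ : \sum_(w in Y) ((w \in misjudged S)%:R * a + 5 / 2 * eps ^+ 2 * a) <= _).
  apply: ler_sum => w wY.
  have le_A : (#|non_nbhd e P w|%:R : R) <= #|non_nbhd e A w|%:R by apply/ler_card/setSD.
  have [wm | wm] := boolP (w \in misjudged S).
    have : (#|non_nbhd e A w|%:R : R) <= a by apply/ler_card/subsetDl.
    by rewrite mul1r; lra.
  move: wm; rewrite inE (Y_small w wY) andbT -ltNge => /ltW.
  by rewrite mul0r add0r; apply: le_trans.
rewrite big_split /= -big_distrl /= sumr_const [#|Y|%:R * _]mulr_natl lerD2r.
apply: ler_wpM2r; first exact: ler0n.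
rewrite -natr_sum ler_nat -cards_in_sum subset_leq_card //.
by apply/subsetP => w; rewrite inE => /andP [].
Qed.

Lemma card_light_good (S : {set T}) :
  0 < eps -> eps < 3^-1 -> 0 < p -> good_sample S ->
  88 / 100 * mu <= #|light S|%:R /\ #|light S|%:R <= 11 / 10 * mu.
Proof.
move=> eps0 eps_lt p0 /and5P [Z_lo Z_hi _ Sheavy_small _].
have eps2_le : eps ^+ 2 <= 9^-1 by rewrite expr2; nra.
have mu0 : 0 <= mu by rewrite mulr_ge0 ?ler0n ?ltW.
have mu_big : 9 * nu <= mu by have := ler_wpM2r mu0 eps2_le; lra.
by rewrite card_light; have := ler0n R #|S :&: heavy S|; split; lra.
Qed.

Lemma light_sub_component (S : {set T}) :
  symmetric e -> 0 < eps -> eps < 3^-1 -> 0 < p -> good_sample S ->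
  exists2 x, x \in S & light S \subset component e S x.
Proof.
move=> sym eps0 eps_lt p0 good; have [X_lo _] := card_light_good eps0 eps_lt p0 good.
move: good => /and5P [Z_lo Z_hi _ _ _].
have eps2_le : eps ^+ 2 <= 9^-1 by rewrite expr2; nra.
have mu0 : 0 <= mu by rewrite mulr_ge0 ?ler0n ?ltW.
have mu_big : 9 * nu <= mu by have := ler_wpM2r mu0 eps2_le; lra.
have [x xX] : {x | x \in light S}.
  by apply/sigW/set0Pn; rewrite -card_gt0 -(ltr_nat R); lra.
exists x; first exact: (subsetP (light_sub S)).
apply/subsetP => y yX; rewrite inE (subsetP (light_sub S)) //=.
by apply: light_connected => //; lra.
Qed.

Lemma card_Tset_light (S : {set T}) :
  symmetric e -> 0 < eps -> eps < 3^-1 -> 0 < p -> A \subset D ->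
  (1 - eps) * #|D|%:R <= a -> good_sample S ->
  (1 - 13 / 2 * eps) * #|D|%:R - (eps ^+ 2)^-1 <= #|Tset e eps (light S)|%:R.
Proof.
move=> sym eps0 eps_lt p0 AD A_big good.
have [X_lo X_hi] := card_light_good eps0 eps_lt p0 good.
move: good => /and5P [Z_lo Z_hi heavy_small Sheavy_small mis_small].
set X := light S; set m : R := #|D|%:R.
have eps2_0 : 0 <= eps ^+ 2 by rewrite sqr_ge0.
set Y := Kset e (2 * eps ^+ 2) X; set A' := A :\: heavy S.
have nu0 : 0 <= nu by rewrite mulr_ge0 ?mulr_ge0 ?ler0n ?ltW.
have A'Y : A' \subset Y.
  by apply: non_heavy_sub_Kset; have := ler_wpM2l eps2_0 X_lo; lra.
have Y_small w : w \in Y -> #|S :&: non_nbhd e A w|%:R <= 221 / 100 * nu.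
  move=> /sampled_non_nbhd_Kset; have := ler_wpM2l eps2_0 X_hi; lra.
have T_big := card_Tset_ge sym eps0 A'Y.
have sum_small := sum_non_nbhd_le (subsetDl A (heavy S)) Y_small.
have A'_card : #|A'|%:R = a - #|heavy S|%:R.
  by rewrite card_setDR (setIidPr _) //; apply/subsetP => v; rewrite inE => /andP [].
have A'_le_Y := ler_card A'Y.
have a_le_m : a <= m by apply: ler_card.
have a_pos : 0 < a by rewrite -(pmulr_rgt0 _ p0); lra.
have Y_lo : 9 / 10 * a <= #|Y|%:R by have := ler_wpM2r (ltW a_pos) (ltW eps_lt); lra.
have epsY : 0 < eps * #|Y|%:R by rewrite mulr_gt0 //; lra.
have ratio_small : (\sum_(w in Y) (#|non_nbhd e A' w|%:R : R)) / (eps * #|Y|%:R)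
    <= eps * m / 90 + 5 / 2 * eps * a.
  rewrite ler_pdivrMr //; apply: le_trans sum_small _.
  have : #|misjudged S|%:R * a <= eps ^+ 2 * m / 100 * (10 / 9 * #|Y|%:R).
    by apply: ler_pM; rewrite ?ler0n //; lra.
  rewrite expr2; lra.
have : 0 <= (a - (1 - eps) * m) * (1 - 26 / 10 * eps) by apply: mulr_ge0; lra.
have : 0 <= (eps ^+ 2)^-1 by rewrite invr_ge0.
have : 0 <= eps * m by rewrite mulr_ge0 ?ler0n ?ltW.
have : 0 <= eps * a by rewrite mulr_ge0 ?ltW.
nra.
Qed.

Lemma good_sample_Tset (S : {set T}) :
  symmetric e -> 0 < eps -> eps < 3^-1 -> 0 < p -> A \subset D ->
  (1 - eps) * #|D|%:R <= a -> good_sample S ->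
  [exists x in S, exists X : {set T}, (X \subset component e S x) &&
     ((1 - 13 / 2 * eps) * #|D|%:R - (eps ^+ 2)^-1 <= (#|Tset e eps X|%:R : R))].
Proof.
move=> sym eps0 eps_lt p0 AD A_big good.
have [x xS light_x] := light_sub_component sym eps0 eps_lt p0 good.
apply/exists_inP; exists x => //; apply/existsP; exists (light S).
by rewrite light_x; apply: card_Tset_light.
Qed.

End GoodSample.

Section BadSampleBounds.
Variables (T : finType) (e : rel T) (eps p : R) (D : {set T}).
#[local] Arguments exp x%_ring_scope.

Local Notation A := (high_degree e eps D).
Local Notation a := (#|A|%:R : R).
Local Notation mu := (p * a).
Local Notation nu := (eps ^+ 2 * mu).
Local Notation tail := (exp (- (nu / 250))).

(* Not [1 / 20]: under the [: R] cast that would be Stdlib's [Rdiv]. *)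
Let s : R := 20%:R^-1.
Let s0 : 0 < s. Proof. rewrite /s; lra. Qed.

Let chernoff_ratio : s / (1 + s) = 21^-1.
Proof. by rewrite /s; field. Qed.

Lemma prob_sample_small (p0 : 0 <= p) (p1 : p <= 1) :
  0 <= nu -> 9 * nu <= mu ->
  prob_subset p (fun S => ~~ (9 / 10 * mu < #|S :&: A|%:R)) <= tail.
Proof.
move=> nu0 mu_big.
apply: le_trans (prob_subset_le p0 p1 (Q := fun S => #|S :&: A|%:R <= 9 / 10 * mu) _) _.
  by move=> S; rewrite -leNgt.
apply: le_trans (chernoff_lower p0 p1 _ s0 (ler0n _ _) (lexx _)) _.
by apply: ler_exp; rewrite chernoff_ratio /s; lra.
Qed.

Lemma prob_sample_large (p0 : 0 <= p) (p1 : p <= 1) :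
  0 <= nu -> 9 * nu <= mu ->
  prob_subset p (fun S => ~~ (#|S :&: A|%:R <= 11 / 10 * mu)) <= tail.
Proof.
move=> nu0 mu_big.
apply: le_trans (prob_subset_le p0 p1
  (Q := fun S => (set0 \subset S) && (11 / 10 * mu <= #|S :&: A|%:R)) _) _.
  by move=> S; rewrite sub0set -ltNge => /ltW.
apply: le_trans (chernoff_upper p0 p1 _ s0 _ (lexx _)) _.
- by rewrite -setI_eq0 set0I.
- lra.
by rewrite cards0 mul1r; apply: ler_exp; rewrite chernoff_ratio /s; lra.
Qed.

Lemma prob_many_heavy (p0 : 0 <= p) (p1 : p <= 1) :
  0 < eps -> 0 < a -> 100 <= nu -> p * eps ^+ 2 * #|D|%:R <= 3 / 2 * nu ->
  prob_subset p (fun S => ~~ (#|heavy e eps p A S|%:R <= eps / 10 * a))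
    <= 10 / eps * tail.
Proof.
move=> eps0 a0 nu_big D_small.
apply: le_trans (prob_subset_le p0 p1 (Q := fun S =>
  eps / 10 * a < #|[set v in A | 17 / 10 * nu <= #|S :&: non_nbhd e A v|%:R]|%:R) _) _.
  by move=> S; rewrite -ltNge.
have th0 : 0 < eps / 10 * a by rewrite mulr_gt0 // divr_gt0.
apply: le_trans (prob_count_gt p0 p1 (c := tail) th0 _) _.
  move=> v vA.
  apply: le_trans (prob_subset_le p0 p1 (Q := fun S =>
    (set0 \subset S) && (17 / 10 * nu <= #|S :&: non_nbhd e A v|%:R)) _) _.
    by move=> S ->; rewrite sub0set.
  apply: le_trans (chernoff_upper p0 p1 _ s0 _ (card_non_nbhd_high_degree vA)) _.
  - by rewrite -setI_eq0 set0I.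
  - lra.
  by rewrite cards0 mul1r; apply: ler_exp; rewrite chernoff_ratio /s; lra.
suff -> : a * tail / (eps / 10 * a) = 10 / eps * tail by [].
by field; rewrite !lt0r_neq0.
Qed.

Lemma prob_many_sampled_heavy (p0 : 0 <= p) (p1 : p <= 1) :
  0 < eps -> 0 < a -> 100 <= nu -> p * eps ^+ 2 * #|D|%:R <= 3 / 2 * nu ->
  prob_subset p (fun S => ~~ (#|S :&: heavy e eps p A S|%:R <= nu / 100))
    <= 100 / eps ^+ 2 * tail.
Proof.
move=> eps0 a0 nu_big D_small.
pose P (v : T) (S : {set T}) := (v \in S) && (17 / 10 * nu <= #|S :&: non_nbhd e A v|%:R).
apply: le_trans (prob_subset_le p0 p1
  (Q := fun S => nu / 100 < #|[set v in A | P v S]|%:R) _) _.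
  move=> S; suff -> : S :&: heavy e eps p A S = [set v in A | P v S] by rewrite -ltNge.
  by apply/setP => v; rewrite !inE /P; case: (v \in S); rewrite /= ?andbF.
have th0 : 0 < nu / 100 by lra.
apply: le_trans (prob_count_gt p0 p1 (c := p * tail) th0 _) _.
  (* [v] is its own non-neighbour; removing it makes the count independent of
     the event [v \in S]. *)
  move=> v vA; set B := non_nbhd e A v :\ v.
  apply: le_trans (prob_subset_le p0 p1 (Q := fun S =>
    ([set v] \subset S) && (17 / 10 * nu - 1 <= #|S :&: B|%:R)) _) _.
    move=> S /andP [vS heavy_v]; rewrite sub1set vS /=.
    have : S :&: non_nbhd e A v \subset (S :&: B) :|: [set v].
      apply/subsetP => z; rewrite in_setI => /andP [zS zn].
      by rewrite in_setU in_setI in_setD1 in_set1 zS zn andbT /= orNb.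
    by move/ler_card/le_trans/(_ (ler_cardU _ _)); rewrite cards1; lra.
  have B_small : #|B|%:R <= eps ^+ 2 * #|D|%:R + 1.
    exact: le_trans (ler_card (subsetDl _ _)) (card_non_nbhd_high_degree vA).
  apply: le_trans (chernoff_upper p0 p1 _ s0 _ B_small) _.
  - by rewrite disjoints1 !inE eqxx.
  - lra.
  rewrite cards1 expr1; apply: ler_wpM2l => //.
  by apply: ler_exp; rewrite chernoff_ratio /s; lra.
have p_neq0 : p != 0 by apply: contraTneq nu_big => ->; rewrite mul0r mulr0; lra.
suff -> : a * (p * tail) / (nu / 100) = 100 / eps ^+ 2 * tail by [].
by field; rewrite p_neq0 !lt0r_neq0.
Qed.

Lemma prob_many_misjudged (p0 : 0 <= p) (p1 : p <= 1) :
  0 < eps -> (0 < #|D|)%nat -> 100 <= nu ->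
  prob_subset p (fun S => ~~ (#|misjudged e eps p A S|%:R <= eps ^+ 2 * #|D|%:R / 100))
    <= 100 * #|T|%:R / (eps ^+ 2 * #|D|%:R) * tail.
Proof.
move=> eps0 D0 nu_big.
pose P (w : T) (S : {set T}) := (5 / 2 * eps ^+ 2 * a <= #|non_nbhd e A w|%:R)
              && (#|S :&: non_nbhd e A w|%:R <= 221 / 100 * nu).
apply: le_trans (prob_subset_le p0 p1
  (Q := fun S => eps ^+ 2 * #|D|%:R / 100 < #|[set w in [set: T] | P w S]|%:R) _) _.
  move=> S; suff -> : misjudged e eps p A S = [set w in [set: T] | P w S].
    by rewrite -ltNge.
  by apply/setP => w; rewrite !inE /P.
have th0 : 0 < eps ^+ 2 * #|D|%:R / 100 by rewrite divr_gt0 // mulr_gt0 ?exprn_gt0 // ltr0n.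
apply: le_trans (prob_count_gt p0 p1 (c := tail) th0 _) _.
  move=> w _; have [far | near] := boolP (5 / 2 * eps ^+ 2 * a <= #|non_nbhd e A w|%:R).
    apply: le_trans (prob_subset_le p0 p1
      (Q := fun S => #|S :&: non_nbhd e A w|%:R <= 221 / 100 * nu) _) _.
      by move=> S /andP [].
    have b0 : 0 <= 5 / 2 * eps ^+ 2 * a by have := mulr_ge0 (sqr_ge0 eps) (ler0n R #|A|); lra.
    apply: le_trans (chernoff_lower p0 p1 _ s0 b0 far) _.
    by apply: ler_exp; rewrite chernoff_ratio /s; lra.
  rewrite prob_subsetE big_pred0 => [|S]; first exact: ltW (exp_gt0 _).
  by rewrite /P (negbTE near).
suff -> : #|[set: T]|%:R * tail / (eps ^+ 2 * #|D|%:R / 100)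
          = 100 * #|T|%:R / (eps ^+ 2 * #|D|%:R) * tail by [].
by rewrite cardsT; field; rewrite !lt0r_neq0 ?ltr0n.
Qed.

Lemma prob_bad_sample (p0 : 0 <= p) (p1 : p <= 1) :
  0 < eps -> 0 < a -> (0 < #|D|)%nat -> 100 <= nu -> 9 * nu <= mu ->
  p * eps ^+ 2 * #|D|%:R <= 3 / 2 * nu ->
  prob_subset p (fun S => ~~ good_sample e eps p D A S)
    <= (2 + 10 / eps + 100 / eps ^+ 2 + 100 * #|T|%:R / (eps ^+ 2 * #|D|%:R))
       * tail.
Proof.
move=> eps0 a0 D0 nu_big mu_big D_small.
have nu0 : 0 <= nu by lra.
have := lerD (prob_sample_small p0 p1 nu0 mu_big) (le_trans (prob_subset_nand p0 p1 _ _)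
  (lerD (prob_sample_large p0 p1 nu0 mu_big) (le_trans (prob_subset_nand p0 p1 _ _)
  (lerD (prob_many_heavy p0 p1 eps0 a0 nu_big D_small) (le_trans (prob_subset_nand p0 p1 _ _)
  (lerD (prob_many_sampled_heavy p0 p1 eps0 a0 nu_big D_small)
        (prob_many_misjudged p0 p1 eps0 D0 nu_big))))))).
move/(le_trans (prob_subset_nand p0 p1 _ _)).
rewrite /good_sample; lra.
Qed.

End BadSampleBounds.

Section GoodSampleProbability.
#[local] Arguments exp x%_ring_scope.

Lemma bad_sample_coef_le (eps delta n m : R) :
  0 < eps -> eps <= 1 -> 0 < delta -> delta <= 1 -> delta * n <= m -> 0 < m ->
  2 + 10 / eps + 100 / eps ^+ 2 + 100 * n / (eps ^+ 2 * m) <= 212 / (eps ^+ 2 * delta).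
Proof.
move=> eps0 eps1 delta0 delta1 n_le m0.
have q0 : 0 < eps ^+ 2 * delta by rewrite mulr_gt0 ?exprn_gt0.
have q_le_eps2 : eps ^+ 2 * delta <= eps ^+ 2.
  by have := ler_wpM2l (exprn_ge0 2 (ltW eps0)) delta1; rewrite mulr1.
have eps2_le_eps : eps ^+ 2 <= eps.
  by have := ler_wpM2l (ltW eps0) eps1; rewrite mulr1 -expr2.
have q_le1 : eps ^+ 2 * delta <= 1 by lra.
have inv_eps : 10 / eps <= 10 / (eps ^+ 2 * delta).
  by rewrite ler_pM2l // lef_pV2 ?posrE //; apply: le_trans eps2_le_eps.
have inv_eps2 : 100 / eps ^+ 2 <= 100 / (eps ^+ 2 * delta).
  by rewrite ler_pM2l // lef_pV2 ?posrE ?exprn_gt0.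
have inv_1 : 2 <= 2 / (eps ^+ 2 * delta).
  by rewrite ler_pdivlMr //; lra.
have ratio : 100 * n / (eps ^+ 2 * m) <= 100 / (eps ^+ 2 * delta).
  rewrite ler_pdivrMr ?mulr_gt0 ?exprn_gt0 //.
  have -> : 100 / (eps ^+ 2 * delta) * (eps ^+ 2 * m) = 100 * m / delta.
    by field; rewrite !lt0r_neq0.
  by rewrite ler_pdivlMr //; lra.
have -> : 212 / (eps ^+ 2 * delta) = 2 / (eps ^+ 2 * delta) + 10 / (eps ^+ 2 * delta)
  + 100 / (eps ^+ 2 * delta) + 100 / (eps ^+ 2 * delta) by ring.
lra.
Qed.

Lemma lt2_of_expN (q x : R) : 0 < q -> q <= 9^-1 -> q^-1 * exp (- x) < 1 -> 2 < x.
Proof.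
move=> q0 q_le; rewrite mulrC ltr_pdivrMr // mul1r => ex_lt.
rewrite ltNge; apply/negP => x_le.
have := expN2_ge; have : exp (- 2) <= exp (- x) by apply: ler_exp; lra.
lra.
Qed.

Lemma expN_tail_le (nu E : R) : 6 * E <= nu -> 2000 < E ->
  256 * exp (- (nu / 250)) <= exp (- (1000^-1 * E)).
Proof.
move=> nu_ge E_big.
have : exp (- (nu / 250)) <= exp (- (1000^-1 * E)) * exp (- 8).
  by rewrite -expD; apply: ler_exp; lra.
have : exp (- 8) * 256 <= 1 by rewrite expN mulrC ler_pdivrMr ?exp_gt0 // mul1r exp8_ge.
have := exp_gt0 (- (1000^-1 * E)); nra.
Qed.

Variables (T : finType) (e : rel T) (eps delta p : R) (D : {set T}).
Hypothesis (irr : irreflexive e) (T0 : (0 < #|T|)%nat).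

Local Notation n := (#|T|%:R : R).
Local Notation m := (#|D|%:R : R).
Local Notation A := (high_degree e eps D).
Local Notation a := (#|A|%:R : R).
Local Notation E := (eps ^+ 4 * delta * (p * n)).
Local Notation nu := (eps ^+ 2 * (p * a)).

Lemma card_high_degree_ge : 0 < eps -> eps < 3^-1 -> near_clique e (eps ^+ 3) D ->
  2 / 3 * m <= a.
Proof.
move=> eps0 eps_lt near; have := card_high_degree irr eps0 near.
by have := ler_wpM2r (ler0n R #|D|) (ltW eps_lt); lra.
Qed.

Lemma nu_ge_E : 0 < eps -> eps < 3^-1 -> 0 < delta -> 0 < p ->
  near_clique e (eps ^+ 3) D -> delta * n <= m -> 6 * E <= nu.
Proof.
move=> eps0 eps_lt delta0 p0 near D_big.
have eps2_le : eps ^+ 2 <= 9^-1 by rewrite expr2; nra.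
have pe2 : 0 <= p * eps ^+ 2 by rewrite mulr_ge0 ?sqr_ge0 // ltW.
have a_lo : 2 / 3 * (delta * n) <= a.
  by have := card_high_degree_ge eps0 eps_lt near; lra.
have := ler_wpM2l pe2 a_lo.
have X0 : 0 <= eps ^+ 2 * delta * (p * n).
  by rewrite !mulr_ge0 ?sqr_ge0 ?ler0n // ltW.
have := ler_wpM2r X0 eps2_le.
rewrite (_ : E = eps ^+ 2 * (eps ^+ 2 * delta * (p * n))); last by ring.
lra.
Qed.

Lemma prob_good_sample_ge :
  0 < eps -> eps < 3^-1 -> 0 < delta -> 0 < p -> p < 1 ->
  near_clique e (eps ^+ 3) D -> delta * n <= m ->
  1 - (eps ^+ 2 * delta)^-1 * exp (- (1000^-1 * eps ^+ 4 * delta * (p * n)))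
    <= prob_subset p (good_sample e eps p D A).
Proof.
move=> eps0 eps_lt delta0 p0 p1 near D_big.
have -> : 1000^-1 * eps ^+ 4 * delta * (p * n) = 1000^-1 * E by ring.
have n0 : 0 < n by rewrite ltr0n.
have delta1 : delta <= 1.
  by rewrite -(ler_pM2r n0) mul1r (le_trans D_big) // ler_nat max_card.
have eps2_le : eps ^+ 2 <= 9^-1 by rewrite expr2; nra.
have q0 : 0 < eps ^+ 2 * delta by rewrite mulr_gt0 ?exprn_gt0.
have q_le : eps ^+ 2 * delta <= 9^-1.
  by have := ler_wpM2l (exprn_ge0 2 (ltW eps0)) delta1; rewrite mulr1; lra.
have [bound_ge1 | small] := leP 1 ((eps ^+ 2 * delta)^-1 * exp (- (1000^-1 * E))).
  by apply: le_trans (prob_subset_ge0 _ _ _); lra.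
have E_big : 2000 < E by have := lt2_of_expN q0 q_le small; lra.
have nu_ge := nu_ge_E eps0 eps_lt delta0 p0 near D_big.
have a_lo := card_high_degree_ge eps0 eps_lt near.
have a0 : 0 < a by apply: lt_le_trans a_lo; have := mulr_gt0 delta0 n0; lra.
have D0 : (0 < #|D|)%nat by rewrite -(ltr0n R) (lt_le_trans a0) ?ler_card ?high_degree_sub.
rewrite prob_subsetC lerD2l lerN2.
apply: le_trans (prob_bad_sample (ltW p0) (ltW p1) eps0 a0 D0 _ _ _) _.
- lra.
- by have := ler_wpM2r (mulr_ge0 (ltW p0) (ltW a0)) eps2_le; lra.
- by have := ler_wpM2l (mulr_ge0 (ltW p0) (sqr_ge0 eps)) a_lo; lra.
have tail0 : 0 <= exp (- (nu / 250)) := ltW (exp_gt0 _).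
have eps1 : eps <= 1 by lra.
have m0 : 0 < m by rewrite ltr0n.
have := ler_wpM2r tail0 (bad_sample_coef_le eps0 eps1 delta0 delta1 D_big m0).
have qi0 : 0 <= (eps ^+ 2 * delta)^-1 by rewrite invr_ge0 ltW.
have := ler_wpM2l qi0 (expN_tail_le nu_ge E_big).
have := mulr_ge0 qi0 tail0; lra.
Qed.

End GoodSampleProbability.

Theorem lemma5p6 :
  exists c : R, 0 < c /\
  forall (T : finType) (e : rel T), simple_graph e -> (0 < #|T|)%nat ->
  forall (eps delta p : R) (D : {set T}),
    0 < eps -> eps < 3^-1 -> 0 < delta -> 0 < p -> p < 1 ->
    near_clique e (eps ^+ 3) D ->
    delta * #|T|%:R <= #|D|%:R ->
    1 - (eps ^+ 2 * delta)^-1 * exp (- (c * eps ^+ 4 * delta * (p * #|T|%:R)))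
      <= prob_subset p (fun S : {set T} =>
           [exists x in S, exists X : {set T},
              (X \subset component e S x) &&
              ((1 - 13 / 2 * eps) * #|D|%:R - (eps ^+ 2)^-1
                 <= (#|Tset e eps X|%:R : R))]).
Proof.
exists (1000%:R)^-1; split; first by rewrite invr_gt0 ltr0n.
move=> T e [sym irr] T0 eps delta p D eps0 eps_lt delta0 p0 p1 near D_big.
rewrite !RmultE RoppE.
apply: le_trans (prob_good_sample_ge irr T0 eps0 eps_lt delta0 p0 p1 near D_big) _.
apply: (prob_subset_le (ltW p0) (ltW p1)) => S good.
exact: (good_sample_Tset sym eps0 eps_lt p0 (high_degree_sub e eps D)
  (card_high_degree irr eps0 near) good).
Qed.
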